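(* Let $Q=\sum_{n\ge1}\frac{q_n}{n_\psi!}\partial_\psi^n$ be a $\partial_\psi$-delta operator (so $q_1\ne0$) with $\partial_\psi$-basic polynomial sequence $(p_n)_{n\ge0}$, and let $q(t)=\sum_{n\ge1}\frac{q_n}{n_\psi!}t^n\in F[[t]]$ with compositional inverse $q^{-1}(z)\in F[[z]]$. Then, as formal power series in $z$ with coefficients in $P$, $$\sum_{k\ge0}\frac{p_k(x)}{k_\psi!}z^k=\exp_\psi\{x\,q^{-1}(z)\},\qquad \exp_\psi(u):=\sum_{n\ge0}\frac{u^n}{n_\psi!}.$$
   Context: Let $F$ be a field of characteristic $0$, $P=F[x]$. Fix $(\psi_n)_{n\ge0}$ in $F$ with $\psi_0=1$, $\psi_n\ne0$, $\psi_{-1}=0$; $n_\psi=\psi_{n-1}/\psi_n$, $n_\psi!=1/\psi_n$, $0_\psi!=1$. $\partial_\psi x^n=n_\psi x^{n-1}$ (linear); $E^a(\partial_\psi)=\sum_k\frac{a^k}{k_\psi!}\partial_\psi^k$. A $\partial_\psi$-delta operator is a linear $Q:P\to P$ commuting with all $E^a(\partial_\psi)$, $a\in F$, with $Q(x)$ a nonzero constant. Its $\partial_\psi$-basic sequence: $\deg p_n=n$, $p_0=1$, $p_n(0)=0$ for $n>0$, $Qp_n=n_\psi p_{n-1}$. *)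

From HB Require Import structures.
From mathcomp Require Import all_boot all_order all_algebra.
Set Implicit Arguments. Unset Strict Implicit. Unset Printing Implicit Defensive.
Import Order.TTheory GRing.Theory Num.Theory.
Local Open Scope ring_scope.

Section PsiCalculus.
Variable F : fieldType.
Variable psi : nat -> F.   (* psi_0 = 1, psi_n <> 0, psi_{-1} = 0 *)

Definition npsi (n : nat) : F := if n is n'.+1 then psi n' / psi n else 0.

Definition nfact (n : nat) : F := (psi n)^-1.

(* the psi-derivative: x^n |-> n_psi x^{n-1}, extended linearly *)
Definition dpsi (p : {poly F}) : {poly F} :=
  \poly_(i < (size p).-1) (npsi i.+1 * p`_i.+1).

(* E^a(d_psi) = sum_k a^k/k_psi! d_psi^k; the sum is finite on each
   polynomial since d_psi^k p = 0 for k >= size p *)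
Definition Epsi (a : F) (p : {poly F}) : {poly F} :=
  \sum_(k < size p) ((a ^+ k) / nfact k) *: iter k dpsi p.

Definition is_psi_delta (Q : {linear {poly F} -> {poly F}}) : Prop :=
  (forall (a : F) (p : {poly F}), Q (Epsi a p) = Epsi a (Q p)) /\
  (exists c : F, c != 0 /\ Q 'X = c%:P).

Definition is_psi_basic (Q : {linear {poly F} -> {poly F}})
  (p : nat -> {poly F}) : Prop :=
  [/\ forall n, size (p n) = n.+1,
      p 0%N = 1,
      forall n, (0 < n)%N -> (p n).[0] = 0 &
      forall n, Q (p n) = npsi n *: p n.-1].

End PsiCalculus.

Section FPS.
Variable F : fieldType.
Definition fps := nat -> F.
Definition fps_one : fps := fun k => (k == 0%N)%:R.
Definition fps_X : fps := fun k => (k == 1%N)%:R.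
Definition fps_mul (a b : fps) : fps :=
  fun k => \sum_(i < k.+1) a i * b (k - i)%N.
Definition fps_pow (a : fps) (n : nat) : fps := iter n (fps_mul a) fps_one.
(* composition f(g(z)), meaningful when g 0 = 0 *)
Definition fps_comp (f g : fps) : fps :=
  fun k => \sum_(n < k.+1) f n * fps_pow g n k.
Definition fps_comp_inverse (f g : fps) : Prop :=
  [/\ g 0%N = 0, fps_comp f g = fps_X & fps_comp g f = fps_X].
End FPS.

(* Write a_{k,m} for the coefficient of x^m/m_psi! in p_k/k_psi!, and
   b_{k,m} for the coefficient of z^k in q^{-1}(z)^m.  Comparing coefficients
   of x^m in Q p_{k+1} = (k+1)_psi p_k gives
     sum_{n>=1} q_n/n_psi! a_{k+1,m+n} = a_{k,m},
   and comparing coefficients of z^{k+1} in q^{-1}(z)^m q(q^{-1}(z)) = z q^{-1}(z)^m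
   gives the same recurrence for b.  Both families start from the same row
   k = 0, vanish at m = 0 for k > 0 and above the diagonal m > k; since
   q_1 != 0, the recurrence determines row k+1 from row k by descending on m,
   so a = b, which is the claimed identity coefficient by coefficient. *)
From HB Require Import structures.
From mathcomp Require Import all_boot all_order all_algebra.
From mathcomp Require Import zify ring.
Set Implicit Arguments. Unset Strict Implicit. Unset Printing Implicit Defensive.
Import GRing.Theory.
Local Open Scope ring_scope.

Lemma eq0_by_recurrence (R : idomainType) (c d : nat -> R) (K : nat) :
  c 1%N != 0 -> d 0%N = 0 -> (forall m, (K < m)%N -> d m = 0) ->
  (forall m, \sum_(1 <= n < K.+1) c n * d (m + n)%N = 0) ->
  forall m, d m = 0.
Proof.
move=> c1 d0 d_hi rec.
suff down i m : (K < m + i)%N -> (0 < m)%N -> d m = 0.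
  by case=> // m; apply: (down K.+1); lia.
elim: i m => [|i IHi] m m_hi m_gt0; first by apply: d_hi; rewrite addn0 in m_hi.
have [m_lt|m_le] := ltnP K (m + i); first exact: IHi.
have := rec m.-1; rewrite big_ltn; last by lia.
rewrite big_nat_cond big1 ?addr0 => [|n /andP[/andP[n_gt1 _] _]]; last first.
  by rewrite IHi ?mulr0 //; lia.
by rewrite addn1 prednK // => /eqP; rewrite mulf_eq0 (negbTE c1) => /eqP.
Qed.

Section DeltaFamily.
Variable F : fieldType.

Definition delta_family (c : fps F) (a : nat -> nat -> F) : Prop :=
  [/\ forall m, a 0%N m = (m == 0%N)%:R,
      forall k, a k.+1 0%N = 0,
      forall k m, (k < m)%N -> a k m = 0 &
      forall k m, \sum_(1 <= n < k.+2) c n * a k.+1 (m + n)%N = a k m].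

Lemma delta_family_unique (c : fps F) (a b : nat -> nat -> F) :
  c 1%N != 0 -> delta_family c a -> delta_family c b -> a =2 b.
Proof.
move=> c1 [a0 a_S0 a_hi a_rec] [b0 b_S0 b_hi b_rec].
elim=> [|k IHk] m; first by rewrite a0 b0.
apply/eqP; rewrite -subr_eq0; apply/eqP; move: m.
apply: (@eq0_by_recurrence _ c _ k.+1 c1) => [|m m_hi|m].
- by rewrite a_S0 b_S0 subr0.
- by rewrite a_hi // b_hi // subr0.
- rewrite (eq_bigr (fun n => c n * a k.+1 (m + n)%N - c n * b k.+1 (m + n)%N));
    last by move=> n _; rewrite mulrBr.
  by rewrite sumrB a_rec b_rec IHk subrr.
Qed.

End DeltaFamily.

Section PowersOfSeries.
Variables (F : fieldType) (g : fps F).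
Hypothesis g0 : g 0%N = 0.

Lemma fps_pow_eq0 m k : (k < m)%N -> fps_pow g m k = 0.
Proof.
elim: m k => [|m IHm] k //= k_lt.
rewrite /fps_mul big1 // => -[[|i] i_lt] _ /=; first by rewrite g0 mul0r.
by rewrite IHm ?mulr0 //; lia.
Qed.

Lemma fps_pow_trunc K n k : (k < K)%N ->
  fps_pow g n k = ((\poly_(i < K) g i) ^+ n)`_k.
Proof.
elim: n k => [|n IHn] k k_lt /=; first by rewrite expr0 coef1.
rewrite exprS coefM /fps_mul; apply: eq_bigr => -[i i_lt] _ /=.
by rewrite coef_poly IHn ?ifT //; lia.
Qed.

Lemma fps_comp_widen (c : fps F) N k : (k < N)%N ->
  \sum_(n < N) c n * fps_pow g n k = fps_comp c g k.
Proof.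
move=> k_lt; rewrite -(subnKC k_lt); elim: (N - k.+1)%N => [|j IHj].
  by rewrite addn0.
rewrite addnS big_ord_recr IHj.
have -> : fps_pow g (k.+1 + j) k = 0 by apply: fps_pow_eq0; lia.
by rewrite mulr0 /= addr0.
Qed.

Lemma fps_pow_comp_rec (c : fps F) : c 0%N = 0 -> fps_comp c g = fps_X F ->
  forall k m, \sum_(1 <= n < k.+2) c n * fps_pow g (m + n) k.+1 = fps_pow g m k.
Proof.
move=> c0 cg k m.
set G := \poly_(i < k.+2) g i.
set H := \sum_(n < k.+2) c n *: G ^+ n.
have H_X j : (j < k.+2)%N -> H`_j = 'X`_j.
  move=> j_lt; rewrite coef_sum.
  under eq_bigr => n _ do rewrite coefZ -(@fps_pow_trunc _ n _ j_lt).
  by rewrite fps_comp_widen // cg coefX.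
rewrite big_add1 /= big_mkord.
transitivity (\sum_(n < k.+2) c n * fps_pow g (m + n) k.+1).
  by rewrite [RHS]big_ord_recl c0 mul0r add0r.
transitivity (G ^+ m * H)`_k.+1.
  rewrite mulr_sumr coef_sum; apply: eq_bigr => n _.
  by rewrite -scalerAr coefZ -exprD (@fps_pow_trunc _ _ _ (ltnSn k.+1)).
transitivity (G ^+ m * 'X)`_k.+1.
  by rewrite !coefM; apply: eq_bigr => i _; rewrite H_X //; lia.
by rewrite coefMX -fps_pow_trunc.
Qed.

Lemma fps_pow_delta_family (c : fps F) : c 0%N = 0 -> fps_comp c g = fps_X F ->
  delta_family c (fun k m => fps_pow g m k).
Proof.
move=> c0 cg; split=> [[|m]|k|k m|]; last exact: fps_pow_comp_rec.
- by [].
- by rewrite fps_pow_eq0.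
- by [].
- exact: fps_pow_eq0.
Qed.

End PowersOfSeries.

Section PsiDerivative.
Variables (F : fieldType) (psi : nat -> F).

Lemma coef_dpsi (d : {poly F}) i : (dpsi psi d)`_i = npsi psi i.+1 * d`_i.+1.
Proof.
rewrite /dpsi coef_poly; case: ltnP => // i_ge.
by rewrite nth_default ?mulr0 //; move: i_ge; case: (size d) => /=; lia.
Qed.

Hypothesis psi_nz : forall n, psi n != 0.

Lemma coef_iter_dpsi (d : {poly F}) n i :
  (iter n (dpsi psi) d)`_i = psi i / psi (i + n)%N * d`_(i + n).
Proof.
elim: n i => [|n IHn] i /=; first by rewrite addn0 divff ?mul1r.
rewrite coef_dpsi IHn /npsi addSnnS mulrA; congr (_ * _).
by rewrite mulrA -(mulrA (psi i)) mulVf // mulr1.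
Qed.

Variables (Q : {linear {poly F} -> {poly F}}) (qs : nat -> F).
Hypothesis Qexp : forall p : {poly F},
  Q p = \sum_(1 <= n < size p) (qs n / nfact psi n) *: iter n (dpsi psi) p.

Lemma psi_delta_coef1_neq0 : is_psi_delta psi Q -> qs 1%N / nfact psi 1 != 0.
Proof.
case=> _ [c [c_nz QX]]; apply: contra c_nz => /eqP q1.
move: QX; rewrite Qexp size_polyX big_nat1 q1 scale0r => /esym/eqP.
by rewrite polyC_eq0.
Qed.

Definition basic_coef (p : nat -> {poly F}) k m := psi k * (p k)`_m / psi m.

Lemma basic_delta_family (p : nat -> {poly F}) : psi 0%N = 1 ->
  is_psi_basic psi Q p ->
  delta_family (fun n => if n is 0%N then 0 else qs n / nfact psi n)
    (basic_coef p).
Proof.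
move=> psi0 [p_size p0 p_root pQ]; rewrite /basic_coef.
split=> [[|m]|k|k m k_lt|k m].
- by rewrite p0 coef1 psi0 mul1r divr1.
- by rewrite p0 coef1 mulr0 mul0r.
- by rewrite -horner_coef0 p_root // mulr0 mul0r.
- by rewrite nth_default ?p_size // mulr0 mul0r.
have := congr1 (fun r : {poly F} => r`_m) (pQ k.+1).
rewrite /= Qexp p_size coef_sum coefZ /npsi => E.
transitivity (psi k.+1 / psi m *
  \sum_(1 <= n < k.+2) ((qs n / nfact psi n) *: iter n (dpsi psi) (p k.+1))`_m).
  rewrite mulr_sumr; apply: eq_big_nat => -[|n] // _.
  rewrite coefZ coef_iter_dpsi /nfact; field.
  by rewrite !psi_nz oner_eq0.
by rewrite E; field; rewrite !psi_nz.
Qed.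

End PsiDerivative.

Theorem mainTheorem7 (F : fieldType) (psi : nat -> F)
  (charF : [pchar F] =i pred0)
  (psi0 : psi 0%N = 1) (psi_nz : forall n, psi n != 0)
  (Q : {linear {poly F} -> {poly F}}) (qs : nat -> F)
  (Qdelta : is_psi_delta psi Q)
  (Qexp : forall p : {poly F},
     Q p = \sum_(1 <= n < size p) (qs n / nfact psi n) *: iter n (dpsi psi) p)
  (p : nat -> {poly F}) (pbasic : is_psi_basic psi Q p)
  (qinv : fps F)
  (qinv_inv : fps_comp_inverse
     (fun n => if n is 0%N then 0 else qs n / nfact psi n) qinv) :
  forall k : nat,
    (nfact psi k)^-1 *: p k =
    \sum_(n < k.+1) (fps_pow qinv n k / nfact psi n) *: 'X^n.
Proof.
move=> k; have [p_size _ _ _] := pbasic; have [qinv0 q_qinv _] := qinv_inv.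
have a_eq_b := delta_family_unique (psi_delta_coef1_neq0 Qexp Qdelta)
  (basic_delta_family psi_nz Qexp psi0 pbasic)
  (fps_pow_delta_family qinv0 (erefl 0) q_qinv).
rewrite -(poly_def k.+1 (fun n => fps_pow qinv n k / nfact psi n)).
apply/polyP => m; rewrite coefZ coef_poly.
case: ltnP => m_lt; last by rewrite nth_default ?p_size ?mulr0.
rewrite -a_eq_b /basic_coef /nfact invrK; field.
by rewrite psi_nz oner_eq0.
Qed.
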